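(* Let ${\mathcal O}$ be a non-even nilpotent orbit with Jordan type ${\bf d}=[d_1,\dots,d_k]$ in a classical simple Lie algebra, and let $\Theta_1$ be the set of simple roots of weight $1$ in its weighted Dynkin diagram. If ${\mathcal O}$ is in one of the cases (i) $\mathfrak{sl}_n$; (ii) $\mathfrak{so}_{2n+1}$ (resp. $\mathfrak{sp}_{2n}$) with an odd (resp. even) $q\ge0$ such that $d_1,\dots,d_q$ are odd and $d_{q+1},\dots,d_k$ even; (iii-a) $\mathfrak{so}_{2n}$ with an even $q\ge4$ such that $d_1,\dots,d_q$ are odd and the rest even — then $|\Theta_1|$ is even. If ${\mathcal O}\subset\mathfrak{so}_{2n}$ has exactly two odd parts, at positions $2t-1,2t$ ($t\ge1$), then: if $t=1$, $\alpha_n\in\Theta_1$ and $|\Theta_1|$ is odd; if $k=2t\ge4$, $|\Theta_1|$ is even and $\alpha_{n-1},\alpha_n\in\Theta_1$; if $k>2t\ge4$, $|\Theta_1|$ is even.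
   Context: Parts satisfy $d_1\ge\dots\ge d_k$. Weighted Dynkin diagram: for an $\mathfrak{sl}_2$-triple $(x,y,h)$, $x\in{\mathcal O}$, $h$ in a fixed Cartan subalgebra and dominant, the simple root $\alpha$ gets weight $\alpha(h)\in\{0,1,2\}$; ${\mathcal O}$ is even if no weight equals $1$. Simple roots labelled as in Bourbaki ($\alpha_{n-1},\alpha_n$ the fork nodes in type $D_n$). *)

From HB Require Import structures.
From mathcomp Require Import all_boot all_order all_algebra.
Set Implicit Arguments. Unset Strict Implicit. Unset Printing Implicit Defensive.
Import Order.TTheory GRing.Theory Num.Theory.

(* Classical simple Lie algebras, indexed by a type tag and n:
   TA n = sl_n (rank n-1, natural rep of dim n),
   TB n = so_{2n+1}, TC n = sp_{2n}, TD n = so_{2n} (rank n).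
   Simple roots alpha_1..alpha_rank labelled as in Bourbaki. *)
Inductive ctype := TA | TB | TC | TD.

Definition natdim (T : ctype) (n : nat) : nat :=
  match T with TA => n | TB => n.*2.+1 | TC => n.*2 | TD => n.*2 end.

Definition rank (T : ctype) (n : nat) : nat :=
  match T with TA => n.-1 | _ => n end.

Definition is_jordan_type (T : ctype) (n : nat) (d : seq nat) : bool :=
  [&& sorted geq d, all (fun x => 0 < x) d, sumn d == natdim T n &
   match T with
   | TA => true
   | TB | TD => all (fun e => ~~ odd e ==> ~~ odd (count_mem e d)) d
   | TC => all (fun e => odd e ==> ~~ odd (count_mem e d)) d
   end].

(* eigenvalues of ad-semisimple h of an sl2-triple on the natural rep:
   each part d_i contributes d_i-1, d_i-3, ..., 1-d_i. *)
Definition hvals (d : seq nat) : seq int :=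
  flatten [seq [seq ((di%:Z - 1 - (2 * j)%:Z)%R) | j <- iota 0 di] | di <- d].

(* sorted non-increasingly: dominant representative *)
Definition hsorted (d : seq nat) : seq int :=
  sort (fun x y : int => (y <= x)%R) (hvals d).

Definition hcoord (d : seq nat) (i : nat) : int := nth 0%R (hsorted d) i.

(* weight alpha_i(h) of the simple root alpha_i, 1 <= i <= rank *)
Definition wdd (T : ctype) (n : nat) (d : seq nat) (i : nat) : int :=
  let h := hcoord d in
  match T with
  | TA => (h i.-1 - h i)%R
  | TB => if i == n then h n.-1 else (h i.-1 - h i)%R
  | TC => if i == n then (2 * h n.-1)%R else (h i.-1 - h i)%R
  | TD => if i == n then (h n.-2 + h n.-1)%R else (h i.-1 - h i)%R
  end.

Definition Theta1 (T : ctype) (n : nat) (d : seq nat) : seq nat :=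
  [seq i <- iota 1 (rank T n) | wdd T n d i == 1%R].

Definition is_even_orbit (T : ctype) (n : nat) (d : seq nat) : bool :=
  all (fun i => wdd T n d i != 1%R) (iota 1 (rank T n)).

From mathcomp Require Import all_boot all_order all_algebra zify.
Import Order.TTheory GRing.Theory Num.Theory.
Set Implicit Arguments. Unset Strict Implicit. Unset Printing Implicit Defensive.

(* The weight of a simple root is a difference of consecutive coordinates of
   the dominant h (only the last node of types B, C, D differs), so Theta_1
   counts the unit drops v, v - 1 in the non-increasing list of h-eigenvalues.
   A drop v -> v - 1 occurs exactly once for each value v such that v and
   v - 1 are both eigenvalues.  The absolute values of the eigenvalues are the
   odd numbers below the largest even part E and the even numbers below the
   largest odd part O, so there are m = min(E, O) such drops among the
   nonnegative eigenvalues and 2m in all.  If the largest part is odd then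
   m = E is even; if there is no odd part, all eigenvalues are odd and there
   is no drop at all.  With exactly two odd parts in type D the fork adds
   [1 is an eigenvalue] = [E >= 2] to the count, which gives E + 1 when the
   largest part is odd and O + 1 otherwise. *)

Lemma count_iota_interval a b N :
  count (fun j => a <= j < b) (iota 0 N) = minn b N - minn a N.
Proof.
elim: N => [|N IH]; first by rewrite /=; lia.
rewrite -addn1 iotaD count_cat IH /= add0n addn0.
by case: (boolP (a <= N)); case: (boolP (N < b)) => /=; lia.
Qed.

Lemma count_undup_subset (T : eqType) (P : pred T) (s R : seq T) :
  uniq R -> {subset s <= R} -> count P (undup s) = count (fun v => (v \in s) && P v) R.
Proof.
move=> uR sR; have : perm_eq (undup s) [seq v <- R | v \in s].
  apply: uniq_perm; rewrite ?undup_uniq ?filter_uniq // => v.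
  by rewrite mem_undup mem_filter; case: (boolP (v \in s)) => // /sR.
by move/permP->; rewrite count_filter; apply: eq_count => v; rewrite /= andbC.
Qed.

Fixpoint unit_drops (s : seq int) : nat :=
  if s is x :: s' then
    (if s' is y :: _ then (x - y == 1)%R : nat else 0) + unit_drops s'
  else 0.

Lemma unit_drops_cons2 (x y : int) s :
  unit_drops [:: x, y & s] = (x - y == 1)%R + unit_drops (y :: s).
Proof. by []. Qed.

Lemma unit_drops_nth (s : seq int) :
  unit_drops s = count (fun i => nth 0 s i - nth 0 s i.+1 == 1)%R (iota 0 (size s).-1).
Proof.
elim: s => [|x [|y s] IH] //.
by rewrite unit_drops_cons2 IH /= -[1]/(1 + 0) iotaDl count_map.
Qed.

Lemma unit_drops_take (s : seq int) r : r <= size s ->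
  unit_drops (take r s) = count (fun i => nth 0 s i - nth 0 s i.+1 == 1)%R (iota 0 r.-1).
Proof.
move=> hr; rewrite unit_drops_nth size_takel //; apply: eq_in_count => i.
by rewrite mem_iota => /andP[_ hi]; rewrite !nth_take //; lia.
Qed.

Lemma unit_drops_undup (s : seq int) : sorted >=%R s ->
  unit_drops s = count (fun v => (v - 1)%R \in s) (undup s).
Proof.
elim: s => [|x s IH] // hs.
case: s => [|y s] in IH hs *; first by rewrite /= inE; case: eqP; lia.
have hyx : (y <= x)%R by case/andP: (order_path_min ge_trans hs).
rewrite unit_drops_cons2 IH ?(path_sorted hs) //.
have [<-|neq_yx] := eqVneq y x.
  have -> : undup [:: y, y & s] = undup (y :: s) by rewrite [LHS]/= mem_head.
  by rewrite subrr add0n; apply: eq_count => v; rewrite !inE orbA orbb.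
have lt_yx : (y < x)%R by rewrite lt_neqAle neq_yx hyx.
have le_y w : w \in y :: s -> (w <= y)%R.
  by rewrite inE => /predU1P[->//|]; apply: (allP (order_path_min ge_trans (path_sorted hs))).
have x_notin : x \notin y :: s by apply/negP => /le_y; rewrite leNgt lt_yx.
have -> : undup [:: x, y & s] = x :: undup (y :: s) by rewrite [LHS]/= (negPf x_notin).
have x_pred : ((x - 1)%R \in [:: x, y & s]) = (x - y == 1)%R.
  rewrite (in_cons x) (_ : (x - 1 == x)%R = false) /=; last by apply/eqP; lia.
  apply/idP/eqP => [/le_y hle|hxy]; first lia.
  by rewrite (_ : (x - 1)%R = y) ?mem_head //; lia.
rewrite [count _ (x :: _)]/= x_pred; congr (_ + _).
apply: eq_in_count => v /[!mem_undup] /le_y hvy /=.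
by rewrite (in_cons x); case: eqP => // hvx; lia.
Qed.

Lemma unit_drops_count (s R : seq int) : sorted >=%R s -> uniq R -> {subset s <= R} ->
  unit_drops s = count (fun v => (v \in s) && ((v - 1)%R \in s)) R.
Proof. by move=> hs uR sR; rewrite unit_drops_undup // (count_undup_subset _ uR sR). Qed.

Section SortedDecreasing.
Variables (disp : Order.disp_t) (T : porderType disp) (x0 : T).
Implicit Types (s : seq T) (P : pred T).

Lemma sorted_ge_nth s i j : sorted >=%O s -> i <= j -> j < size s ->
  (nth x0 s j <= nth x0 s i)%O.
Proof.
move=> hs hij hj; apply: (sorted_leq_nth ge_trans (@lexx _ T)) => //.
by rewrite inE (leq_ltn_trans hij).
Qed.

Lemma sorted_nth_upclosed s P i : sorted >=%O s ->
  (forall x y, (x <= y)%O -> P x -> P y) -> i < size s ->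
  P (nth x0 s i) = (i < count P s).
Proof.
move=> hs hP; elim: s i hs => [|x s IH] i // hs hi.
have le_x := allP (order_path_min ge_trans hs).
have [Px|nPx] := boolP (P x).
  by case: i hi => [|i] hi /=; rewrite Px // IH ?(path_sorted hs).
have nP y : y \in x :: s -> P y = false.
  rewrite inE => /predU1P[->|/le_x le_yx]; first exact: negbTE.
  by apply: contraNF nPx; apply: hP.
have c0 : count P s = 0.
  by apply/eqP; rewrite -leqn0 leqNgt -has_count; apply/hasPn => y hy; rewrite nP // inE hy orbT.
by rewrite nP ?mem_nth //= (negbTE nPx) c0.
Qed.

Lemma mem_take_sorted s m v : sorted >=%O s -> 0 < m <= size s ->
  (v \in take m s) = (v \in s) && (nth x0 s m.-1 <= v)%O.
Proof.
move=> hs /andP[m_gt0 m_le]; apply/idP/andP => [v_in|[/(nthP x0)[i hi <-] le_v]].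
  split; first exact: mem_take v_in.
  move: v_in => /(nthP x0)[i]; rewrite size_takel // => hi <-.
  by rewrite nth_take // sorted_ge_nth //; lia.
have [lt_im|le_mi] := ltnP i m.
  by rewrite -(nth_take x0 lt_im) mem_nth // size_takel.
have -> : nth x0 s i = nth x0 s m.-1.
  by apply/le_anti; rewrite le_v sorted_ge_nth //; lia.
by rewrite -(nth_take x0 (_ : m.-1 < m)) ?mem_nth ?size_takel //; lia.
Qed.

End SortedDecreasing.

Definition hblock (p : nat) : seq int := [seq (p%:Z - 1 - (2 * j)%:Z)%R | j <- iota 0 p].

Lemma hvals_cons p d : hvals (p :: d) = hblock p ++ hvals d.
Proof. by []. Qed.

Lemma mem_hblock v p : (v \in hblock p) = (absz v < p) && (odd (absz v) != odd p).
Proof.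
apply/mapP/andP => [[j /[!mem_iota] /andP[_ hj] ->]|[lt_vp odd_vp]]; first by split; lia.
have [v_ge0|v_lt0] := boolP (0 <= v)%R.
  by exists ((p - 1 - absz v) %/ 2); rewrite ?mem_iota; lia.
by exists ((p - 1 + absz v) %/ 2); rewrite ?mem_iota; lia.
Qed.

Lemma ltn_bigmax_has (P : pred nat) a d :
  (a < \max_(x <- d | P x) x) = has (fun x => P x && (a < x)) d.
Proof.
elim: d => [|x d IH]; first by rewrite big_nil.
by rewrite big_cons /= -IH; case: (P x) => //=; rewrite leq_max.
Qed.

Definition max_even_part (d : seq nat) : nat := \max_(p <- d | ~~ odd p) p.
Definition max_odd_part (d : seq nat) : nat := \max_(p <- d | odd p) p.

(* A part p contributes the eigenvalues p - 1, p - 3, ..., 1 - p, whose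
   absolute values are the numbers below p of the parity opposite to p. *)
Definition is_hval_abs (d : seq nat) (a : nat) : bool :=
  (odd a && (a < max_even_part d)) || (~~ odd a && (a < max_odd_part d)).

Lemma mem_hsorted v d : (v \in hsorted d) = is_hval_abs d (absz v).
Proof.
rewrite mem_sort /is_hval_abs /max_even_part /max_odd_part.
elim: d => [|p d IH]; first by rewrite !big_nil !ltn0 !andbF.
rewrite hvals_cons mem_cat mem_hblock IH !big_cons.
by case: (boolP (odd p)) => op /=; rewrite ?leq_max; lia.
Qed.

Lemma odd_max_even_part d : odd (max_even_part d) = false.
Proof.
rewrite /max_even_part; elim: d => [|x d IH]; rewrite ?big_nil ?big_cons //.
by case: ifP => // /negbTE ox; move: IH; lia.
Qed.

Lemma odd_max_odd_part d : odd (max_odd_part d) = (0 < max_odd_part d).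
Proof.
rewrite /max_odd_part; elim: d => [|x d IH]; rewrite ?big_nil ?big_cons //.
by case: ifP => // ox; move: IH; lia.
Qed.

Lemma max_odd_part_gt0 d : (0 < max_odd_part d) = has odd d.
Proof. by rewrite /max_odd_part ltn_bigmax_has; apply: eq_has => -[|x] /=; rewrite ?andbT. Qed.

Lemma is_hval_abs_pair d a : is_hval_abs d a && is_hval_abs d a.+1 =
  (a < minn (max_even_part d) (max_odd_part d)).
Proof.
have := odd_max_even_part d; have := odd_max_odd_part d; rewrite /is_hval_abs.
by move: (max_even_part d) (max_odd_part d) => E O; lia.
Qed.

Lemma count_hblock_gt0 p : count (fun v => 0 < v)%R (hblock p) = p./2.
Proof.
rewrite count_map (eq_in_count (a2 := fun j => 0 <= j < p./2)).
  by rewrite count_iota_interval; lia.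
by move=> j /[!mem_iota] /= hj; lia.
Qed.

Lemma count_hblock_ge0 p : count (fun v => 0 <= v)%R (hblock p) = p./2 + odd p.
Proof.
rewrite count_map (eq_in_count (a2 := fun j => 0 <= j < p./2 + odd p)).
  by rewrite count_iota_interval; lia.
by move=> j /[!mem_iota] /= hj; lia.
Qed.

Definition num_pos_hvals (d : seq nat) : nat := count (fun v => 0 < v)%R (hvals d).

Lemma num_pos_hvals_cons p d : num_pos_hvals (p :: d) = p./2 + num_pos_hvals d.
Proof. by rewrite /num_pos_hvals hvals_cons count_cat count_hblock_gt0. Qed.

Lemma sumn_num_pos_hvals d : sumn d = (num_pos_hvals d).*2 + count odd d.
Proof. by elim: d => [|p d IH] //=; rewrite num_pos_hvals_cons IH; lia. Qed.

Lemma count_hvals_ge0 d : count (fun v => 0 <= v)%R (hvals d) = num_pos_hvals d + count odd d.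
Proof.
elim: d => [|p d IH] //=.
by rewrite hvals_cons count_cat count_hblock_ge0 IH num_pos_hvals_cons; lia.
Qed.

Lemma size_hsorted d : size (hsorted d) = sumn d.
Proof.
rewrite size_sort; elim: d => [|p d IH] //.
by rewrite hvals_cons size_cat IH size_map size_iota.
Qed.

Lemma sorted_hsorted d : sorted >=%R (hsorted d).
Proof. by apply: sort_sorted => x y; rewrite le_total. Qed.

Lemma hcoord_gt0 d i : i < sumn d -> (0 < hcoord d i)%R = (i < num_pos_hvals d).
Proof.
move=> hi; rewrite /hcoord.
rewrite (@sorted_nth_upclosed _ _ 0%R _ (fun v => 0 < v)%R i (sorted_hsorted d)).
- by rewrite count_sort.
- by move=> x y le_xy /lt_le_trans; apply.
- by rewrite size_hsorted.
Qed.

Lemma hcoord_ge0 d i : i < sumn d -> (0 <= hcoord d i)%R = (i < num_pos_hvals d + count odd d).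
Proof.
move=> hi; rewrite /hcoord.
rewrite (@sorted_nth_upclosed _ _ 0%R _ (fun v => 0 <= v)%R i (sorted_hsorted d)).
- by rewrite count_sort count_hvals_ge0.
- by move=> x y le_xy /le_trans; apply.
- by rewrite size_hsorted.
Qed.

Lemma hcoord_eq0 d i : num_pos_hvals d <= i < num_pos_hvals d + count odd d ->
  hcoord d i = 0%R.
Proof.
move=> hi; have hsum := sumn_num_pos_hvals d.
have := hcoord_gt0 (i := i) (d := d); have := hcoord_ge0 (i := i) (d := d); lia.
Qed.

Lemma unit_drops_hsorted d :
  unit_drops (hsorted d) = (minn (max_even_part d) (max_odd_part d)).*2.
Proof.
set E := max_even_part d; set O := max_odd_part d; set m := minn E O.
rewrite (@unit_drops_count _
  ([seq Posz j | j <- iota 0 (E + O)] ++ [seq Negz j | j <- iota 0 (E + O)])).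
- rewrite count_cat !count_map.
  rewrite (eq_in_count (a1 := preim _ _) (a2 := fun j => 0 <= j < m + (0 < m))); last first.
    move=> [|j] _ /=; rewrite !mem_hsorted.
      by rewrite (_ : absz (0 - 1)%R = 1) // is_hval_abs_pair; lia.
    by rewrite (_ : (Posz j.+1 - 1)%R = Posz j) /= 1?andbC ?is_hval_abs_pair; lia.
  rewrite (eq_in_count (a1 := preim _ _) (a2 := fun j => 0 <= j < m.-1)); last first.
    move=> j _ /=; rewrite !mem_hsorted (_ : (Negz j - 1)%R = Negz j.+1) /=; last lia.
    by rewrite is_hval_abs_pair; lia.
  by rewrite !count_iota_interval; lia.
- exact: sorted_hsorted.
- rewrite cat_uniq !map_inj_uniq ?iota_uniq //= => [|a b [] //|a b [] //].
  by rewrite andbT; apply/hasPn => _ /mapP[j _ ->]; apply/mapP => -[].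
- move=> v; rewrite mem_hsorted mem_cat /is_hval_abs => hv.
  by case: v hv => j hv; apply/orP; [left|right]; apply/mapP; exists j; rewrite ?mem_iota //=; lia.
Qed.

Lemma unit_drops_take_hsorted d m : 0 < m <= sumn d -> hcoord d m.-1 = 0%R ->
  unit_drops (take m (hsorted d)) = minn (max_even_part d) (max_odd_part d).
Proof.
move=> hm h0; set E := max_even_part d; set O := max_odd_part d.
have in_take v : (v \in take m (hsorted d)) = is_hval_abs d (absz v) && (0 <= v)%R.
  rewrite (mem_take_sorted 0%R) ?sorted_hsorted ?size_hsorted //.
  by rewrite -mem_hsorted -/(hcoord d m.-1) h0.
rewrite (@unit_drops_count _ [seq Posz j | j <- iota 0 (E + O)]).
- rewrite count_map (eq_in_count (a2 := fun j => 1 <= j < (minn E O).+1)).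
    by rewrite count_iota_interval; lia.
  move=> [|j] _ /=; rewrite !in_take ?andbF //.
  by rewrite (_ : (Posz j.+1 - 1)%R = Posz j) /= ?andbT 1?andbC ?is_hval_abs_pair; lia.
- exact/take_sorted/sorted_hsorted.
- by rewrite map_inj_uniq ?iota_uniq // => a b [].
- move=> v; rewrite in_take /is_hval_abs => /andP[hv v_ge0]; apply/mapP.
  by exists (absz v); rewrite ?mem_iota; lia.
Qed.

Lemma unit_drops_take_hsorted_no_odd d m : ~~ has odd d ->
  unit_drops (take m (hsorted d)) = 0.
Proof.
move=> no_odd; have O0 : max_odd_part d = 0.
  by apply/eqP; rewrite eqn0Ngt max_odd_part_gt0.
set s := take m (hsorted d).
rewrite (@unit_drops_count _ (undup s)) ?undup_uniq ?take_sorted ?sorted_hsorted //; last first.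
  by move=> v; rewrite mem_undup.
rewrite (eq_count (a2 := pred0)) ?count_pred0 // => v /=.
apply/negbTE/negP => /andP[/mem_take + /mem_take].
by rewrite !mem_hsorted /is_hval_abs O0; lia.
Qed.

Lemma size_Theta1 T n d :
  size (Theta1 T n d) = count (fun i => wdd T n d i.+1 == 1%R) (iota 0 (rank T n)).
Proof. by rewrite size_filter -[1]/(1 + 0) iotaDl count_map. Qed.

Lemma mem_Theta1 T n d i :
  (i \in Theta1 T n d) = (0 < i <= rank T n) && (wdd T n d i == 1%R).
Proof. by rewrite mem_filter mem_iota andbC; congr (_ && _); lia. Qed.

Lemma size_Theta1_A n d : sumn d = n -> size (Theta1 TA n d) = unit_drops (hsorted d).
Proof. by move=> hn; rewrite size_Theta1 unit_drops_nth size_hsorted hn. Qed.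

Lemma size_Theta1_B n d : sumn d = n.*2.+1 -> hcoord d n = 0%R ->
  size (Theta1 TB n d) = unit_drops (take n.+1 (hsorted d)).
Proof.
move=> hsum h0; rewrite size_Theta1 unit_drops_take ?size_hsorted ?hsum /=; last lia.
apply: eq_in_count => i _ /=; have [en|//] := eqVneq i.+1 n.
by rewrite -/(hcoord d i.+1) en h0 subr0 -en.
Qed.

Lemma size_Theta1_C n d : 0 < n -> sumn d = n.*2 ->
  size (Theta1 TC n d) = unit_drops (take n (hsorted d)).
Proof.
move=> hn hsum; rewrite size_Theta1 unit_drops_take ?size_hsorted ?hsum /=; last lia.
rewrite -[X in iota 0 X](prednK hn) -[n.-1.+1]addn1 iotaD count_cat /= add0n prednK // eqxx.
rewrite (_ : (2 * _ == 1)%R = false) ?addn0; last by apply/eqP; lia.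
by apply: eq_in_count => i /[!mem_iota] /= hi; have [|//] := eqVneq i.+1 n; lia.
Qed.

Lemma size_Theta1_D n d : 1 < n -> sumn d = n.*2 ->
  size (Theta1 TD n d) =
  unit_drops (take n (hsorted d)) + (hcoord d n.-2 + hcoord d n.-1 == 1)%R.
Proof.
move=> hn hsum; have n_gt0 : 0 < n by lia.
rewrite size_Theta1 unit_drops_take ?size_hsorted ?hsum /=; last lia.
rewrite -[X in iota 0 X](prednK n_gt0) -[n.-1.+1]addn1 iotaD count_cat /=.
rewrite add0n prednK // eqxx addn0.
by congr (_ + _); apply: eq_in_count => i /[!mem_iota] /= hi; have [|//] := eqVneq i.+1 n; lia.
Qed.

Lemma is_even_orbitE T n d : is_even_orbit T n d = (size (Theta1 T n d) == 0).
Proof. by rewrite size_filter eqn0Ngt -has_count -all_predC. Qed.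

Lemma leq_bigmax_head (P : pred nat) d : sorted geq d -> \max_(p <- d | P p) p <= head 0 d.
Proof.
case: d => [|p d] hs; first by rewrite big_nil.
apply/bigmax_leqP_seq => x /predU1P[->|xd] _ //.
exact: (allP (order_path_min (rev_trans leq_trans) hs)).
Qed.

Lemma minn_max_parts_odd_head d : sorted geq d -> odd (head 0 d) ->
  minn (max_even_part d) (max_odd_part d) = max_even_part d.
Proof.
case: d => [|p d] // hs odd_p; apply/minn_idPl/(leq_trans (leq_bigmax_head _ hs)).
exact: leq_bigmax_seq (mem_head p d) odd_p.
Qed.

Lemma minn_max_parts_even_head d : sorted geq d -> ~~ odd (head 0 d) ->
  minn (max_even_part d) (max_odd_part d) = max_odd_part d.
Proof.
case: d => [|p d] hs even_p; first by rewrite /max_odd_part big_nil minn0.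
apply/minn_idPr/(leq_trans (leq_bigmax_head _ hs)).
exact: leq_bigmax_seq (mem_head p d) even_p.
Qed.

Lemma hcoord_last_pos d k : num_pos_hvals d = k.+1 ->
  (hcoord d k == 1%R) = (1 < max_even_part d).
Proof.
move=> hpos; have hk : k < sumn d by rewrite sumn_num_pos_hvals hpos; lia.
have := hcoord_gt0 hk; rewrite hpos ltnSn => hk_gt0.
have one_mem : (1%R \in hsorted d) = (1 < max_even_part d).
  by rewrite mem_hsorted /is_hval_abs /= orbF.
apply/eqP/idP => [hk1|/[!(esym one_mem)] /(nthP 0%R)[i /[!size_hsorted] hi hi1]].
  by rewrite -one_mem -hk1 mem_nth ?size_hsorted.
have le_ik : i <= k by have := hcoord_gt0 hi; rewrite /hcoord hi1 hpos.
have := sorted_ge_nth 0%R (sorted_hsorted d) le_ik; rewrite size_hsorted hi1 => /(_ hk) hle.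
by apply/eqP; rewrite eq_le hle -/(hcoord d k); lia.
Qed.

Lemma Theta1_A_even n d : sumn d = n -> ~~ odd (size (Theta1 TA n d)).
Proof. by move=> hn; rewrite size_Theta1_A // unit_drops_hsorted odd_double. Qed.

Lemma Theta1_B_even n d : sorted geq d -> sumn d = n.*2.+1 -> odd (head 0 d) ->
  ~~ odd (size (Theta1 TB n d)).
Proof.
move=> hs hsum odd_head; have hc := sumn_num_pos_hvals d.
have h0 : hcoord d n = 0%R by apply: hcoord_eq0; lia.
rewrite size_Theta1_B // unit_drops_take_hsorted ?hsum //; last lia.
by rewrite minn_max_parts_odd_head // odd_max_even_part.
Qed.

Lemma Theta1_C_even n d : 0 < n -> sorted geq d -> sumn d = n.*2 ->
  (has odd d -> odd (head 0 d)) -> ~~ odd (size (Theta1 TC n d)).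
Proof.
move=> hn hs hsum odd_head; rewrite size_Theta1_C //.
have [has_odd|no_odd] := boolP (has odd d); last by rewrite unit_drops_take_hsorted_no_odd.
have hc := sumn_num_pos_hvals d; move: (has_odd); rewrite has_count => c_gt0.
have h0 : hcoord d n.-1 = 0%R by apply: hcoord_eq0; lia.
rewrite unit_drops_take_hsorted ?hsum //; last lia.
by rewrite minn_max_parts_odd_head ?odd_max_even_part ?odd_head.
Qed.

Lemma Theta1_D_even n d : 1 < n -> sorted geq d -> sumn d = n.*2 -> odd (head 0 d) ->
  4 <= count odd d -> ~~ odd (size (Theta1 TD n d)).
Proof.
move=> hn hs hsum odd_head c_ge4; have hc := sumn_num_pos_hvals d.
have h0 : hcoord d n.-1 = 0%R by apply: hcoord_eq0; lia.
have h1 : hcoord d n.-2 = 0%R by apply: hcoord_eq0; lia.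
rewrite size_Theta1_D // h0 h1 addn0 unit_drops_take_hsorted ?hsum //; last lia.
by rewrite minn_max_parts_odd_head // odd_max_even_part.
Qed.

Lemma Theta1_D_two_odd n d : 1 < n -> sumn d = n.*2 -> count odd d = 2 ->
  [/\ size (Theta1 TD n d) =
        minn (max_even_part d) (max_odd_part d) + (1 < max_even_part d),
      (n.-1 \in Theta1 TD n d) = (1 < max_even_part d)
    & (n \in Theta1 TD n d) = (1 < max_even_part d)].
Proof.
move=> hn hsum c2; have hc := sumn_num_pos_hvals d.
have h0 : hcoord d n.-1 = 0%R by apply: hcoord_eq0; lia.
have h1 : (hcoord d n.-2 == 1%R) = (1 < max_even_part d).
  by apply: hcoord_last_pos; lia.
rewrite size_Theta1_D // unit_drops_take_hsorted ?hsum // ?h0 ?addr0 ?h1; last lia.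
have n1_range : 0 < n.-1 <= n by lia.
have n_range : 0 < n <= n by lia.
have n1_neq : (n.-1 == n) = false by lia.
by rewrite !mem_Theta1 /= eqxx n1_neq n1_range n_range h0 ?subr0 ?addr0 h1.
Qed.

Lemma Theta1_D_two_odd_odd_head n d : 1 < n -> sorted geq d -> sumn d = n.*2 ->
  count odd d = 2 -> odd (head 0 d) -> ~~ is_even_orbit TD n d ->
  n \in Theta1 TD n d /\ odd (size (Theta1 TD n d)).
Proof.
move=> hn hs hsum c2 odd_head; rewrite is_even_orbitE.
have [-> _ ->] := Theta1_D_two_odd hn hsum c2.
rewrite minn_max_parts_odd_head //; have := odd_max_even_part d; lia.
Qed.

Lemma Theta1_D_two_odd_even_head n d : 1 < n -> sorted geq d -> sumn d = n.*2 ->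
  count odd d = 2 -> ~~ odd (head 0 d) ->
  [/\ ~~ odd (size (Theta1 TD n d)), n.-1 \in Theta1 TD n d & n \in Theta1 TD n d].
Proof.
move=> hn hs hsum c2 even_head.
have [-> -> ->] := Theta1_D_two_odd hn hsum c2.
have O_odd : odd (max_odd_part d) by rewrite odd_max_odd_part max_odd_part_gt0 has_count c2.
have O_le_E : max_odd_part d <= max_even_part d.
  by rewrite -(minn_max_parts_even_head hs even_head) geq_minl.
have := odd_max_even_part d; rewrite minn_max_parts_even_head // => E_even.
by split; lia.
Qed.

Lemma count_odd_nth_interval d a b : b <= size d ->
  (forall i, i < size d -> odd (nth 0 d i) = (a <= i < b)) -> count odd d = b - a.
Proof.
move=> hb hd; rewrite -(mkseq_nth 0 d) /mkseq count_map.
rewrite (eq_in_count (a2 := fun i => a <= i < b)) ?count_iota_interval; first lia.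
by move=> i /[!mem_iota] /andP[_ hi]; apply: hd.
Qed.

Theorem lemma3p2 :
  (* (i) sl_n *)
  (forall (n : nat) (d : seq nat),
      2 <= n -> is_jordan_type TA n d -> ~~ is_even_orbit TA n d ->
      ~~ odd (size (Theta1 TA n d))) /\
  (* (ii) so_{2n+1}, q odd *)
  (forall (n : nat) (d : seq nat) (q : nat),
      1 <= n -> is_jordan_type TB n d -> ~~ is_even_orbit TB n d ->
      odd q -> q <= size d ->
      (forall i, i < size d -> odd (nth 0 d i) = (i < q)) ->
      ~~ odd (size (Theta1 TB n d))) /\
  (* (ii) sp_{2n}, q even *)
  (forall (n : nat) (d : seq nat) (q : nat),
      1 <= n -> is_jordan_type TC n d -> ~~ is_even_orbit TC n d ->
      ~~ odd q -> q <= size d ->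
      (forall i, i < size d -> odd (nth 0 d i) = (i < q)) ->
      ~~ odd (size (Theta1 TC n d))) /\
  (* (iii-a) so_{2n}, q even, q >= 4 *)
  (forall (n : nat) (d : seq nat) (q : nat),
      3 <= n -> is_jordan_type TD n d -> ~~ is_even_orbit TD n d ->
      ~~ odd q -> 4 <= q -> q <= size d ->
      (forall i, i < size d -> odd (nth 0 d i) = (i < q)) ->
      ~~ odd (size (Theta1 TD n d))) /\
  (* so_{2n} with exactly two odd parts, at positions 2t-1, 2t *)
  (forall (n : nat) (d : seq nat) (t : nat),
      3 <= n -> is_jordan_type TD n d -> ~~ is_even_orbit TD n d ->
      1 <= t -> t.*2 <= size d ->
      (forall i, i < size d ->
         odd (nth 0 d i) = (i == t.*2 - 2) || (i == t.*2 - 1)) ->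
      (t = 1 -> n \in Theta1 TD n d /\ odd (size (Theta1 TD n d))) /\
      (size d = t.*2 -> 4 <= t.*2 ->
         ~~ odd (size (Theta1 TD n d)) /\
         n.-1 \in Theta1 TD n d /\ n \in Theta1 TD n d) /\
      (t.*2 < size d -> 4 <= t.*2 -> ~~ odd (size (Theta1 TD n d)))).
Proof.
have jordan_facts T n d : is_jordan_type T n d -> sorted geq d /\ sumn d = natdim T n.
  by case/and4P => hs _ /eqP.
split; [|split; [|split; [|split]]].
- by move=> n d _ /jordan_facts[_ hsum] _; apply: Theta1_A_even.
- move=> n d q _ /jordan_facts[hs hsum] _ odd_q q_le hodd.
  by apply: Theta1_B_even hs hsum _; rewrite -nth0 hodd; lia.
- move=> n d q n_gt0 /jordan_facts[hs hsum] _ _ q_le hodd.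
  apply: Theta1_C_even n_gt0 hs hsum _ => /hasP[_ /(nthP 0)[i hi <-]].
  have d_gt0 : 0 < size d := leq_ltn_trans (leq0n i) hi.
  by rewrite -nth0 !hodd // => /(leq_ltn_trans (leq0n i)).
- move=> n d q hn /jordan_facts[hs hsum] _ _ q_ge4 q_le hodd.
  apply: Theta1_D_even hs hsum _ _; first lia.
    by rewrite -nth0 hodd; lia.
  by rewrite (@count_odd_nth_interval d 0 q q_le hodd) subn0.
move=> n d t hn /jordan_facts[hs hsum] not_even t_ge1 t_le hodd.
have c2 : count odd d = 2.
  rewrite (@count_odd_nth_interval _ (t.*2 - 2) t.*2) // => [|i hi]; first lia.
  by rewrite hodd //; lia.
have head_odd : odd (head 0 d) = (t == 1) by rewrite -nth0 hodd; lia.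
have even_head : 1 < t ->
    [/\ ~~ odd (size (Theta1 TD n d)), n.-1 \in Theta1 TD n d & n \in Theta1 TD n d].
  move=> t_gt1; apply: Theta1_D_two_odd_even_head _ hs hsum c2 _; first lia.
  by rewrite head_odd; lia.
split; [|split] => [t1|_ t_ge2|_ t_ge2].
- by apply: Theta1_D_two_odd_odd_head => //; [lia | rewrite head_odd t1].
- by have /even_head[] : 1 < t by lia.
- by have /even_head[] : 1 < t by lia.
Qed.
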